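(* Let $\mathcal{V}\subseteq\mathbb{R}^D$ be compact, $u\in\mathcal{U}$ fixed, and suppose $f(u,\cdot)$ is continuous and $l$-Lipschitz on $\mathcal{V}$ ($l>0$). Assume $R(u)$ and $S(u)$ are both finite. Let $\zeta=\phi(u)-\max_{v\in S(u)\setminus R(u)}f(u,v)$ (with $\zeta=\infty$ if $S(u)=R(u)$). Let $\epsilon\ge0$ with $\epsilon<\zeta$, let $A\subseteq\mathcal{V}$ be finite, and let $\delta\ge0$ with $\delta<\tfrac12(\zeta-\epsilon)/l$. If $d_H(R(u),A)\le\delta$ and $d_H(A,S(u))\le\delta$, then for each $v'\in R^\epsilon_A(u)$ there is $v\in R(u)$ with $\|v-v'\|\le\delta$.
   Context: Definitions: $\phi(u)=\max_{v\in\mathcal{V}} f(u,v)$, $R(u)=\{v\in\mathcal{V}: f(u,v)=\phi(u)\}$. $S(u)$ is the set of local maximum points of $f(u,\cdot)$: $S(u)=\{v_0\in\mathcal{V}:\exists r>0,\ \forall v\in\mathcal{V},\ \|v_0-v\|\le r\Rightarrow f(u,v_0)\ge f(u,v)\}$ (so $R(u)\subseteq S(u)$). For finite $A\subseteq\mathcal{V}$: $\phi_A(u)=\max_{v\in A}f(u,v)$ and $R^\epsilon_A(u)=\{v\in A:\phi_A(u)-f(u,v)\le\epsilon\}$. For sets $X,Y$, $d_H(X,Y)=\max_{x\in X}\min_{y\in Y}\|x-y\|$. *)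

From Stdlib Require Import Reals Lra List Classical ClassicalEpsilon.
From Stdlib Require Fin.
Open Scope R_scope.

Definition Vec (D : nat) : Type := Fin.t D -> R.

Fixpoint sqsum (D : nat) : Vec D -> R :=
  match D return Vec D -> R with
  | O => fun _ => 0
  | S n => fun x => (x Fin.F1) ^ 2 + sqsum n (fun i => x (Fin.FS i))
  end.

Definition vnorm {D : nat} (x : Vec D) : R := sqrt (sqsum D x).
Definition vdist {D : nat} (x y : Vec D) : R := vnorm (fun i => x i - y i).

(* Sequential compactness (equivalent to compactness in the metric space R^D) *)
Definition seq_compact {D : nat} (V : Vec D -> Prop) : Prop :=
  forall x : nat -> Vec D, (forall n, V (x n)) ->
    exists (phi : nat -> nat) (l : Vec D),
      (forall n m, (n < m)%nat -> (phi n < phi m)%nat) /\ V l /\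
      forall eps, eps > 0 -> exists N, forall n, (n >= N)%nat ->
        vdist (x (phi n)) l < eps.

Definition continuous_on {D : nat} (V : Vec D -> Prop) (g : Vec D -> R) : Prop :=
  forall v, V v -> forall eps, eps > 0 -> exists d, d > 0 /\
    forall w, V w -> vdist w v < d -> Rabs (g w - g v) < eps.

Definition lipschitz_on {D : nat} (V : Vec D -> Prop) (g : Vec D -> R) (l : R) : Prop :=
  forall v w, V v -> V w -> Rabs (g v - g w) <= l * vdist v w.

Definition finite_set {T : Type} (P : T -> Prop) : Prop :=
  exists s : list T, forall x, P x <-> In x s.

Definition is_max_val {T : Type} (P : T -> Prop) (g : T -> R) (m : R) : Prop :=
  (exists x, P x /\ g x = m) /\ forall x, P x -> g x <= m.
Definition is_min_val {T : Type} (P : T -> Prop) (g : T -> R) (m : R) : Prop :=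
  (exists x, P x /\ g x = m) /\ forall x, P x -> m <= g x.

(* max / min over P; junk value 0 when not attained (e.g. empty P) *)
Definition maxval {T : Type} (P : T -> Prop) (g : T -> R) : R :=
  match excluded_middle_informative (exists m, is_max_val P g m) with
  | left H => proj1_sig (constructive_indefinite_description _ H)
  | right _ => 0
  end.
Definition minval {T : Type} (P : T -> Prop) (g : T -> R) : R :=
  match excluded_middle_informative (exists m, is_min_val P g m) with
  | left H => proj1_sig (constructive_indefinite_description _ H)
  | right _ => 0
  end.

Section Defs.
Context {U : Type} {D : nat} (f : U -> Vec D -> R) (V : Vec D -> Prop).

Definition phi (u : U) : R := maxval V (f u).

Definition Rmaxset (u : U) : Vec D -> Prop := fun v => V v /\ f u v = phi u.

Definition Slocset (u : U) : Vec D -> Prop := fun v0 =>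
  V v0 /\ exists r, r > 0 /\ forall v, V v -> vdist v0 v <= r -> f u v0 >= f u v.

(* zeta = phi(u) - max_{v in S(u)\R(u)} f(u,v);  None encodes +infinity
   (the case S(u) \ R(u) empty) *)
Definition zeta (u : U) : option R :=
  match excluded_middle_informative
          (exists v, Slocset u v /\ ~ Rmaxset u v) with
  | left _ => Some (phi u - maxval (fun v => Slocset u v /\ ~ Rmaxset u v) (f u))
  | right _ => None
  end.

Definition phiA (A : Vec D -> Prop) (u : U) : R := maxval A (f u).
Definition RepsA (A : Vec D -> Prop) (eps : R) (u : U) : Vec D -> Prop :=
  fun v => A v /\ phiA A u - f u v <= eps.
End Defs.

Definition dH {D : nat} (X Y : Vec D -> Prop) : R :=
  maxval X (fun x => minval Y (fun y => vdist x y)).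

Definition lt_ext (x : R) (z : option R) : Prop :=
  match z with None => True | Some z => x < z end.

(** The bound [d_H(A, S(u)) <= delta] gives a local maximiser [s] within
    [delta] of [v']; it suffices to show [s] is a global one.  Otherwise
    [f(u,s) <= phi(u) - zeta], while by [l]-Lipschitz continuity
    [f(u,s) >= f(u,v') - l delta >= phi_A(u) - eps - l delta] and, choosing a
    point of [A] within [delta] of a maximiser (by [d_H(R(u), A) <= delta]),
    [phi_A(u) >= phi(u) - l delta].  Hence [zeta <= eps + 2 l delta], against
    the choice of [delta]. *)

From Stdlib Require Import Reals Lra Lia List Classical ClassicalEpsilon.
Open Scope R_scope.

Lemma sqsum_opp (D : nat) (x y : Vec D) :
  (forall i, y i = - x i) -> sqsum D y = sqsum D x.
Proof.
  revert x y; induction D as [|n IH]; intros x y Hxy; simpl; auto.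
  rewrite (IH (fun i => x (Fin.FS i)) (fun i => y (Fin.FS i))).
  - rewrite Hxy. ring.
  - intro i. apply Hxy.
Qed.

Lemma vdist_sym {D : nat} (x y : Vec D) : vdist x y = vdist y x.
Proof. unfold vdist, vnorm. f_equal. apply sqsum_opp. intro i. ring. Qed.

Lemma lipschitz_on_lower_bound {D : nat} (V : Vec D -> Prop) (g : Vec D -> R)
    (l d : R) (v w : Vec D) :
  lipschitz_on V g l -> 0 <= l -> V v -> V w -> vdist v w <= d ->
  g v - l * d <= g w.
Proof.
  intros Hlip Hl Vv Vw Hd.
  pose proof (Rle_trans _ _ _ (Rle_abs _) (Hlip v w Vv Vw)).
  pose proof (Rmult_le_compat_l _ _ _ Hl Hd).
  lra.
Qed.

Lemma maxval_eq {T : Type} (P : T -> Prop) (g : T -> R) (m : R) :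
  is_max_val P g m -> maxval P g = m.
Proof.
  intro Hm. unfold maxval.
  destruct (excluded_middle_informative _) as [H|H]; [|exfalso; eauto].
  destruct (constructive_indefinite_description _ H) as [m' Hm']; simpl.
  destruct Hm as [[x [Px <-]] Hx], Hm' as [[x' [Px' <-]] Hx'].
  specialize (Hx _ Px'). specialize (Hx' _ Px). lra.
Qed.

Lemma minval_eq {T : Type} (P : T -> Prop) (g : T -> R) (m : R) :
  is_min_val P g m -> minval P g = m.
Proof.
  intro Hm. unfold minval.
  destruct (excluded_middle_informative _) as [H|H]; [|exfalso; eauto].
  destruct (constructive_indefinite_description _ H) as [m' Hm']; simpl.
  destruct Hm as [[x [Px <-]] Hx], Hm' as [[x' [Px' <-]] Hx'].
  specialize (Hx _ Px'). specialize (Hx' _ Px). lra.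
Qed.

Lemma list_argmax {T : Type} (P : T -> Prop) (g : T -> R) (s : list T) :
  (exists x, In x s /\ P x) ->
  exists x, In x s /\ P x /\ forall y, In y s -> P y -> g y <= g x.
Proof.
  induction s as [|a s IH]; intros [x0 [Hx0 Px0]]; [destruct Hx0|].
  destruct (classic (exists x, In x s /\ P x)) as [Hs|Hs].
  - destruct (IH Hs) as [x [Hx [Px Hmax]]].
    destruct (classic (P a /\ g x <= g a)) as [[Pa Hxa]|Hxa].
    + exists a. split; [now left|split; auto].
      intros y [<-|Hy] Py; [lra|]. specialize (Hmax y Hy Py). lra.
    + exists x. split; [now right|split; auto].
      intros y [<-|Hy] Py; auto.
      apply Rlt_le, Rnot_le_lt. intro. apply Hxa. auto.
  - destruct Hx0 as [<-|Hx0]; [|exfalso; eauto].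
    exists a. split; [now left|split; auto].
    intros y [<-|Hy] Py; [lra|exfalso; eauto].
Qed.

Lemma exists_max_val_finite {T : Type} (P : T -> Prop) (g : T -> R) (s : list T) :
  (forall x, P x -> In x s) -> (exists x, P x) -> exists m, is_max_val P g m.
Proof.
  intros Hs [x0 Px0].
  destruct (list_argmax P g s) as [x [_ [Px Hmax]]]; [eauto|].
  exists (g x). split; eauto.
Qed.

Lemma exists_min_val_finite {T : Type} (P : T -> Prop) (g : T -> R) (s : list T) :
  (forall x, P x -> In x s) -> (exists x, P x) -> exists m, is_min_val P g m.
Proof.
  intros Hs Hne.
  destruct (exists_max_val_finite P (fun x => - g x) s Hs Hne)
    as [m [[x [Px gx]] Hm]].
  exists (- m). split.
  - exists x. split; auto. lra.
  - intros y Py. specialize (Hm y Py). lra.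
Qed.

Lemma maxval_finite_ge {T : Type} (P : T -> Prop) (g : T -> R) (s : list T) (x : T) :
  (forall y, P y -> In y s) -> P x -> g x <= maxval P g.
Proof.
  intros Hs Px. destruct (exists_max_val_finite P g s Hs) as [m Hm]; [eauto|].
  rewrite (maxval_eq _ _ _ Hm). apply (proj2 Hm x Px).
Qed.

Lemma dH_witness {D : nat} (X Y : Vec D -> Prop) (x : Vec D) (d : R) :
  finite_set X -> finite_set Y -> (exists y, Y y) -> X x -> dH X Y <= d ->
  exists y, Y y /\ vdist x y <= d.
Proof.
  intros [sX HsX] [sY HsY] HY Xx HXY.
  pose proof (maxval_finite_ge X (fun x => minval Y (fun y => vdist x y)) sX x
    (fun y => proj1 (HsX y)) Xx) as Hx.
  cbn beta in Hx.
  destruct (exists_min_val_finite Y (fun y => vdist x y) sY (fun y => proj1 (HsY y)) HY)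
    as [m Hm].
  rewrite (minval_eq _ _ _ Hm) in Hx.
  destruct Hm as [[y [Yy <-]] _].
  exists y. split; auto. unfold dH in HXY. lra.
Qed.

Lemma strict_mono_ge_id (ph : nat -> nat) :
  (forall n m, (n < m)%nat -> (ph n < ph m)%nat) -> forall n, (n <= ph n)%nat.
Proof.
  intros H n. induction n; [lia|]. specialize (H n (S n) ltac:(lia)). lia.
Qed.

Section ContinuousOnCompact.
Context {D : nat} (V : Vec D -> Prop) (g : Vec D -> R).
Hypothesis (HV : seq_compact V) (Hg : continuous_on V g).

Lemma continuous_seq_compact_cluster (x : nat -> Vec D) :
  (forall n, V (x n)) ->
  exists L, V L /\ forall e, e > 0 -> forall N,
    exists k, (N <= k)%nat /\ Rabs (g (x k) - g L) < e.
Proof.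
  intro Vx. destruct (HV x Vx) as [ph [L [Hmono [VL Hconv]]]].
  exists L. split; auto. intros e He N.
  destruct (Hg L VL e He) as [d [Hd Hgd]].
  destruct (Hconv d Hd) as [N' HN'].
  exists (ph (Nat.max N N')).
  pose proof (strict_mono_ge_id ph Hmono (Nat.max N N')).
  split; [lia|]. apply Hgd; auto. apply HN'. lia.
Qed.

Lemma continuous_seq_compact_bounded : exists B, forall x, V x -> g x <= B.
Proof.
  apply NNPP. intro Hunb.
  assert (Hbig : forall n : nat, exists x, V x /\ INR n < g x).
  { intro n. apply NNPP. intro Hn. apply Hunb. exists (INR n).
    intros x Vx. apply Rnot_lt_le. intro. apply Hn. eauto. }
  destruct (choice _ Hbig) as [x Hx].
  destruct (continuous_seq_compact_cluster x (fun n => proj1 (Hx n)))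
    as [L [_ HL]].
  destruct (INR_unbounded (g L + 1)) as [N HN].
  destruct (HL 1 ltac:(lra) N) as [k [Hk Hgk]].
  apply le_INR in Hk. pose proof (proj2 (Hx k)).
  apply Rabs_def2 in Hgk. lra.
Qed.

Lemma continuous_seq_compact_max :
  (exists x, V x) -> exists m, is_max_val V g m.
Proof.
  intros [x0 Vx0].
  destruct continuous_seq_compact_bounded as [B HB].
  destruct (completeness (fun y => exists x, V x /\ y = g x)) as [M [HM HMleast]].
  { exists B. intros y [x [Vx ->]]. auto. }
  { eauto. }
  assert (Hnear : forall n : nat, exists x, V x /\ M - / INR (S n) < g x).
  { intro n. apply NNPP. intro Hn.
    assert (0 < / INR (S n)) by (apply Rinv_0_lt_compat, lt_0_INR; lia).
    enough (M <= M - / INR (S n)) by lra.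
    apply HMleast. intros y [x [Vx ->]].
    apply Rnot_lt_le. intro. apply Hn. eauto. }
  destruct (choice _ Hnear) as [x Hx].
  destruct (continuous_seq_compact_cluster x (fun n => proj1 (Hx n)))
    as [L [VL HL]].
  assert (HgM : forall y, V y -> g y <= M) by (intros y Vy; apply HM; eauto).
  exists (g L). split; eauto.
  enough (M <= g L) by (intros y Vy; specialize (HgM y Vy); lra).
  apply Rnot_lt_le. intro Hlt.
  destruct (archimed_cor1 ((M - g L) / 2) ltac:(lra)) as [N [HN HN0]].
  destruct (HL ((M - g L) / 2) ltac:(lra) N) as [k [Hk Hgk]].
  assert (/ INR (S k) <= / INR N).
  { apply Rinv_le_contravar; [apply lt_0_INR; lia|apply le_INR; lia]. }
  pose proof (proj2 (Hx k)). apply Rabs_def2 in Hgk. lra.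
Qed.

End ContinuousOnCompact.

Section LocalMaxima.
Context {U : Type} {D : nat} (f : U -> Vec D -> R) (V : Vec D -> Prop) (u : U).

Lemma Rmaxset_Slocset (v : Vec D) :
  (forall w, V w -> f u w <= phi f V u) ->
  Rmaxset f V u v -> Slocset f V u v.
Proof.
  intros Hphi [Vv fv]. split; auto. exists 1. split; [lra|].
  intros w Vw _. rewrite fv. apply Rle_ge, Hphi, Vw.
Qed.

Lemma zeta_gap (s : Vec D) :
  finite_set (Slocset f V u) -> Slocset f V u s -> ~ Rmaxset f V u s ->
  exists z, zeta f V u = Some z /\ f u s <= phi f V u - z.
Proof.
  intros [sS HsS] Ss nRs. unfold zeta.
  destruct (excluded_middle_informative _) as [_|Hno]; [|exfalso; eauto].
  eexists. split; [reflexivity|].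
  pose proof (maxval_finite_ge (fun v => Slocset f V u v /\ ~ Rmaxset f V u v)
    (f u) sS s (fun y Hy => proj1 (HsS y) (proj1 Hy)) (conj Ss nRs)).
  lra.
Qed.

End LocalMaxima.

Theorem mainTheorem3 (D : nat) (U : Type) (f : U -> Vec D -> R)
  (V : Vec D -> Prop) (u : U) (l : R)
  (HV : seq_compact V)
  (Hl : l > 0)
  (Hcont : continuous_on V (f u))
  (Hlip : lipschitz_on V (f u) l)
  (HRfin : finite_set (Rmaxset f V u))
  (HSfin : finite_set (Slocset f V u))
  (eps : R) (Heps0 : 0 <= eps) (Heps : lt_ext eps (zeta f V u))
  (A : Vec D -> Prop) (HAV : forall v, A v -> V v) (HAfin : finite_set A)
  (delta : R) (Hdelta0 : 0 <= delta)
  (Hdelta : match zeta f V u with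
            | None => True
            | Some z => delta < (1/2) * (z - eps) / l
            end)
  (HdRA : dH (Rmaxset f V u) A <= delta)
  (HdAS : dH A (Slocset f V u) <= delta) :
  forall v', RepsA f A eps u v' ->
    exists v, Rmaxset f V u v /\ vdist v v' <= delta.
Proof.
  intros v' [Av' Hv'].
  destruct (continuous_seq_compact_max V (f u) HV Hcont (ex_intro _ v' (HAV _ Av')))
    as [M HM].
  assert (Hphi : phi f V u = M) by exact (maxval_eq _ _ _ HM).
  destruct HM as [[r [Vr fr]] HMle].
  assert (Rr : Rmaxset f V u r) by (split; congruence).
  assert (Sr : Slocset f V u r).
  { apply Rmaxset_Slocset; auto. rewrite Hphi. exact HMle. }
  destruct (dH_witness _ _ r delta HRfin HAfin (ex_intro _ v' Av') Rr HdRA)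
    as [a [Aa Hra]].
  destruct (dH_witness _ _ v' delta HAfin HSfin (ex_intro _ r Sr) Av' HdAS)
    as [s [Ss Hv's]].
  destruct (classic (Rmaxset f V u s)) as [Rs|nRs].
  { exists s. rewrite vdist_sym. auto. }
  destruct (zeta_gap f V u s HSfin Ss nRs) as [z [Hz Hsz]].
  rewrite Hz in Hdelta. exfalso.
  destruct HAfin as [sA HsA].
  pose proof (maxval_finite_ge A (f u) sA a (fun y => proj1 (HsA y)) Aa).
  pose proof (lipschitz_on_lower_bound _ _ _ _ r a Hlip (Rlt_le _ _ Hl)
    Vr (HAV _ Aa) Hra).
  pose proof (lipschitz_on_lower_bound _ _ _ _ v' s Hlip (Rlt_le _ _ Hl)
    (HAV _ Av') (proj1 Ss) Hv's).
  assert (2 * l * delta < z - eps).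
  { apply (Rmult_lt_compat_l (2 * l)) in Hdelta; [|lra].
    replace (2 * l * (1 / 2 * (z - eps) / l)) with (z - eps) in Hdelta
      by (field; lra).
    lra. }
  unfold phiA in Hv'. lra.
Qed.
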